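(* Let $S$ be a finite nonempty set of positive integers, $s=\max S$, and $r\ge 1$ an integer. The minimum density of an $r$-identifying code in the distance graph $G(S)$ is achieved by a periodic set with period at most $(6sr)2^{6sr}$.
   Context: The distance graph $G(S)$ has vertex set $\mathbb{Z}$, with $i,j$ adjacent iff $|i-j|\in S$. For a vertex $u$, $B_r(u)$ is the set of vertices at graph distance at most $r$ from $u$ in $G(S)$. A set $A\subseteq\mathbb{Z}$ is an $r$-identifying code if for every pair of distinct vertices $u,v$, the sets $A\cap B_r(u)$ and $A\cap B_r(v)$ are nonempty and distinct. The density of $A$ is $\delta(A)=\limsup_{N\to\infty}\frac{|A\cap[-N,N]|}{2N+1}$. A set $A$ is periodic with period $p$ if $A+p=A$. *)

From Stdlib Require Import ZArith List Reals.
From Coquelicot Require Import Coquelicot.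
Import ListNotations.
Open Scope Z_scope.

Definition adj (S : list Z) (i j : Z) : Prop := In (Z.abs (i - j)) S.

(* within S n u v : graph distance from u to v in G(S) is at most n. *)
Inductive within (D : list Z) : nat -> Z -> Z -> Prop :=
| within_refl : forall n u, within D n u u
| within_step : forall n u v w, adj D u v -> within D n v w -> within D (Datatypes.S n) u w.

Definition ball (S : list Z) (r : nat) (u v : Z) : Prop := within S r u v.

(* A subset of Z is represented by its (boolean) indicator function. *)
Definition identifying (S : list Z) (r : nat) (A : Z -> bool) : Prop :=
  (forall u, exists a, A a = true /\ ball S r u a) /\
  (forall u v, u <> v ->
     exists a, A a = true /\ ~ (ball S r u a <-> ball S r v a)).

Definition count_in (A : Z -> bool) (N : nat) : nat :=
  length (filter A (map (fun k => Z.of_nat k - Z.of_nat N) (seq 0 (2 * N + 1)))).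

Definition density (A : Z -> bool) : Rbar :=
  LimSup_seq (fun N => (INR (count_in A N) / INR (2 * N + 1))%R).

Definition periodic (A : Z -> bool) (p : Z) : Prop := forall x, A (x + p) = A x.

Definition maxS (S : list Z) : Z := fold_right Z.max 0 S.

From Pilot Require Import Defs.
From Stdlib Require Import ZArith List Reals Lia Lra Classical FunctionalExtensionality Wf_nat.
From Coquelicot Require Import Coquelicot.
(* Coquelicot also defines [within]. *)
Import Defs.
Import ListNotations.
Open Scope Z_scope.

(* Every ball B_r(u) of G(S) lies in [u - m, u + m] with m = s r, so being an
   identifying code only depends on windows of 4m consecutive values.  Among the
   periodic codes of period at most 2^(4m) pick one, A, of minimal ratio c/p
   (weight c on a period p).  If a code B repeats a 4m-window at distance d, the
   segment of B between the two copies, repeated periodically, is again a code,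
   so it has weight at least c d / p when d <= 2^(4m); a longer such cycle
   contains, by pigeonhole, a shorter repetition that splits it into two cycles.
   Cutting [-N, N] into cycles leaves at most 2^(4m) uncovered positions, hence
   B has density at least c/p, the density of A. *)

Lemma maxS_nonneg S : 0 <= maxS S.
Proof. induction S as [|x S IH]; simpl; lia. Qed.

Lemma in_le_maxS S x : In x S -> x <= maxS S.
Proof.
  induction S as [|y S IH]; simpl; [tauto|].
  intros [->|Hx]; [|specialize (IH Hx)]; lia.
Qed.

Lemma maxS_in S : S <> nil -> (forall x, In x S -> 0 < x) -> In (maxS S) S.
Proof.
  induction S as [|y t IH]; [tauto|]. intros _ Hpos. simpl.
  destruct t as [|z t'].
  - left. specialize (Hpos y (or_introl eq_refl)). simpl. lia.
  - assert (Hin : In (maxS (z :: t')) (z :: t')).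
    { apply IH; [discriminate|]. intros x Hx. apply Hpos. right. exact Hx. }
    destruct (Z.max_spec y (maxS (z :: t'))) as [[_ ->]|[_ ->]];
      [right; exact Hin|left; reflexivity].
Qed.

Lemma within_abs_le S n u v : within S n u v -> Z.abs (u - v) <= maxS S * Z.of_nat n.
Proof.
  induction 1 as [n u|n u v w Huv _ IH].
  - pose proof (maxS_nonneg S). nia.
  - apply in_le_maxS in Huv. rewrite Nat2Z.inj_succ. nia.
Qed.

Lemma within_translate S n u v t : within S n u v -> within S n (u + t) (v + t).
Proof.
  induction 1 as [n u|n u v w Huv _ IH]; [constructor|].
  apply within_step with (v + t); [|exact IH].
  unfold adj in *. now replace (u + t - (v + t)) with (u - v) by lia.
Qed.

Lemma ball_translate S r u v t : ball S r (u + t) v <-> ball S r u (v - t).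
Proof.
  unfold ball. split; intro H.
  - apply (within_translate _ _ _ _ (- t)) in H. now replace (u + t + - t) with u in H by lia.
  - apply (within_translate _ _ _ _ t) in H. now replace (v - t + t) with v in H by lia.
Qed.

Lemma within_maxS_multiple S n v : In (maxS S) S -> within S n v (v + maxS S * Z.of_nat n).
Proof.
  intros Hin. revert v. induction n as [|n IH]; intros v.
  - rewrite Z.mul_0_r, Z.add_0_r. constructor.
  - apply within_step with (v + maxS S).
    + unfold adj. pose proof (maxS_nonneg S).
      now replace (Z.abs (v - (v + maxS S))) with (maxS S) by lia.
    + replace (v + maxS S * Z.of_nat (Datatypes.S n)) with (v + maxS S + maxS S * Z.of_nat n) by lia.
      apply IH.
Qed.

Section LocalCodes.

Variables (S : list Z) (r : nat) (m : Z).

(* u is covered, and separated from the vertices to its right whose balls can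
   meet its own ball. *)
Definition identifying_at (B : Z -> bool) (u : Z) : Prop :=
  (exists a, B a = true /\ ball S r u a) /\
  (forall v, u < v <= u + 2 * m ->
     exists a, B a = true /\ ~ (ball S r u a <-> ball S r v a)).

Definition locally_identifying (B : Z -> bool) : Prop := forall u, identifying_at B u.

Lemma identifying_at_translate B u t :
  identifying_at B (u + t) -> identifying_at (fun x => B (x + t)) u.
Proof.
  intros [[a [Ha Hua]] Hsep]. split.
  - exists (a - t). split; [now replace (a - t + t) with a by lia|]. now apply ball_translate.
  - intros v Hv. destruct (Hsep (v + t)) as [b [Hb Hvb]]; [lia|].
    exists (b - t). split; [now replace (b - t + t) with b by lia|].
    rewrite <- !ball_translate. exact Hvb.
Qed.

Lemma locally_identifying_translate B t :
  locally_identifying B -> locally_identifying (fun x => B (x + t)).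
Proof. intros HB u. apply identifying_at_translate, HB. Qed.

Hypothesis ball_le : forall u a, ball S r u a -> Z.abs (u - a) <= m.

Lemma radius_nonneg : 0 <= m.
Proof. pose proof (ball_le 0 0 (within_refl S r 0)). lia. Qed.

Lemma identifying_iff_local B : identifying S r B <-> locally_identifying B.
Proof.
  split.
  - intros [Hcov Hsep] u. split; [apply Hcov|]. intros v Hv. apply Hsep. lia.
  - intros HB. split; [intro u; apply (HB u)|].
    assert (Hlt : forall u v, u < v ->
              exists a, B a = true /\ ~ (ball S r u a <-> ball S r v a)).
    { intros u v Huv. destruct (Z_le_dec v (u + 2 * m)) as [Hnear|Hfar].
      - apply (proj2 (HB u)). lia.
      - destruct (proj1 (HB u)) as [a [Ha Hua]]. exists a. split; [exact Ha|].
        intros [Hva _]. specialize (Hva Hua). apply ball_le in Hua, Hva. lia. }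
    intros u v Huv. destruct (Z_lt_le_dec u v); [auto|].
    destruct (Hlt v u) as [a [Ha Hsep]]; [lia|]. exists a. split; [exact Ha|]. tauto.
Qed.

Lemma identifying_at_local B C u :
  (forall x, u - m <= x <= u + 3 * m -> B x = C x) ->
  identifying_at B u -> identifying_at C u.
Proof.
  intros Heq [[a [Ha Hua]] Hsep]. split.
  - exists a. split; [|exact Hua]. rewrite <- Heq; [exact Ha|]. apply ball_le in Hua. lia.
  - intros v Hv. destruct (Hsep v Hv) as [b [Hb Hvb]]. exists b. split; [|exact Hvb].
    rewrite <- Heq; [exact Hb|].
    (* a separating vertex lies in the ball of u or in that of v *)
    destruct (Z_le_dec (u - m) b); destruct (Z_le_dec b (v + m)); try lia;
      exfalso; apply Hvb; split; intro Hball; apply ball_le in Hball; lia.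
Qed.

End LocalCodes.

Lemma locally_identifying_true S r :
  In (maxS S) S -> (forall u a, ball S r u a -> Z.abs (u - a) <= maxS S * Z.of_nat r) ->
  locally_identifying S r (maxS S * Z.of_nat r) (fun _ => true).
Proof.
  intros Hin Hball u. split.
  - exists u. split; [reflexivity|constructor].
  - intros v Hv. exists (v + maxS S * Z.of_nat r). split; [reflexivity|].
    intros [_ Hvu]. apply Hball in Hvu; [lia|]. apply within_maxS_multiple, Hin.
Qed.

Fixpoint window (B : Z -> bool) (a : Z) (n : nat) : list bool :=
  match n with
  | O => []
  | S n => B a :: window B (a + 1) n
  end.

Definition ones (l : list bool) : nat := length (filter (fun b => b) l).

Definition weight (B : Z -> bool) (a : Z) (n : nat) : nat := ones (window B a n).

Definition periodize (w : list bool) (x : Z) : bool :=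
  nth (Z.to_nat (x mod Z.of_nat (length w))) w false.

Lemma window_length B a n : length (window B a n) = n.
Proof. revert a. induction n; simpl; auto. Qed.

Lemma nth_window B a n k : (k < n)%nat -> nth k (window B a n) false = B (a + Z.of_nat k).
Proof.
  revert a k. induction n as [|n IH]; intros a k Hk; [lia|].
  destruct k as [|k]; simpl.
  - f_equal. lia.
  - rewrite IH by lia. f_equal. lia.
Qed.

Lemma window_ext B C a b n :
  (forall k, (k < n)%nat -> B (a + Z.of_nat k) = C (b + Z.of_nat k)) ->
  window B a n = window C b n.
Proof.
  intros Heq. apply nth_ext with false false; rewrite !window_length; [reflexivity|].
  intros k Hk. rewrite !nth_window by exact Hk. apply Heq, Hk.
Qed.

Lemma window_eq_pointwise B C a b n : window B a n = window C b n ->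
  forall k, (k < n)%nat -> B (a + Z.of_nat k) = C (b + Z.of_nat k).
Proof. intros Heq k Hk. rewrite <- !nth_window with (n := n) by exact Hk. now rewrite Heq. Qed.

Lemma window_add B a n1 n2 :
  window B a (n1 + n2) = window B a n1 ++ window B (a + Z.of_nat n1) n2.
Proof.
  revert a. induction n1 as [|n1 IH]; intros a; simpl.
  - now rewrite Z.add_0_r.
  - rewrite IH. do 3 f_equal. lia.
Qed.

Lemma ones_le_length l : (ones l <= length l)%nat.
Proof. apply filter_length_le. Qed.

Lemma weight_add B a n1 n2 :
  weight B a (n1 + n2) = (weight B a n1 + weight B (a + Z.of_nat n1) n2)%nat.
Proof. unfold weight, ones. now rewrite window_add, filter_app, length_app. Qed.

Lemma weight_ext B C a b n :
  (forall k, (k < n)%nat -> B (a + Z.of_nat k) = C (b + Z.of_nat k)) ->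
  weight B a n = weight C b n.
Proof. intros Heq. unfold weight. now rewrite (window_ext B C a b n Heq). Qed.

Lemma weight_mono B a n1 n2 : (n1 <= n2)%nat -> (weight B a n1 <= weight B a n2)%nat.
Proof. intros Hle. replace n2 with (n1 + (n2 - n1))%nat by lia. rewrite weight_add. lia. Qed.

Lemma weight_periodic_shift P p a b :
  periodic P (Z.of_nat p) -> weight P a p = weight P b p.
Proof.
  intros Hper.
  assert (Hstep : forall a, weight P (a + 1) p = weight P a p).
  { intros a0. pose proof (weight_add P a0 1 p) as Hl. pose proof (weight_add P a0 p 1) as Hr.
    rewrite Nat.add_comm, Hl in Hr.
    assert (Hlast : weight P (a0 + Z.of_nat p) 1 = weight P a0 1)
      by (unfold weight; simpl; now rewrite Hper).
    rewrite Hlast in Hr. replace (a0 + Z.of_nat 1) with (a0 + 1) in Hr by lia. lia. }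
  assert (Hfar : forall a (d : nat), weight P (a + Z.of_nat d) p = weight P a p).
  { intros a0 d. induction d as [|d IH]; [now rewrite Z.add_0_r|].
    rewrite Nat2Z.inj_succ, <- Z.add_1_r, Z.add_assoc, Hstep. exact IH. }
  destruct (Z_le_dec a b).
  - replace b with (a + Z.of_nat (Z.to_nat (b - a))) by lia. now rewrite Hfar.
  - replace a with (b + Z.of_nat (Z.to_nat (a - b))) by lia. now rewrite Hfar.
Qed.

Lemma weight_periodic_mul P p a k :
  periodic P (Z.of_nat p) -> weight P a (k * p) = (k * weight P 0 p)%nat.
Proof.
  intros Hper. revert a. induction k as [|k IH]; intros a; [reflexivity|].
  simpl. rewrite weight_add, IH, (weight_periodic_shift P p a 0 Hper). lia.
Qed.

Lemma count_in_weight A N : count_in A N = weight A (- Z.of_nat N) (2 * N + 1).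
Proof.
  unfold count_in.
  assert (Hgen : forall n st, length (filter A (map (fun k => Z.of_nat k - Z.of_nat N) (seq st n)))
                              = weight A (Z.of_nat st - Z.of_nat N) n).
  { induction n as [|n IH]; intros st; [reflexivity|].
    unfold weight, ones in *. simpl.
    replace (Z.of_nat st - Z.of_nat N + 1) with (Z.of_nat (S st) - Z.of_nat N) by lia.
    destruct (A (Z.of_nat st - Z.of_nat N)); simpl; rewrite IH; reflexivity. }
  apply Hgen.
Qed.

Lemma periodize_add_mul w x k :
  periodize w (x + k * Z.of_nat (length w)) = periodize w x.
Proof. unfold periodize. now rewrite Z_mod_plus_full. Qed.

Lemma periodic_periodize w : periodic (periodize w) (Z.of_nat (length w)).
Proof. intros x. rewrite <- (Z.mul_1_l (Z.of_nat (length w))) at 1. apply periodize_add_mul. Qed.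

Lemma periodize_window B a p x : 0 <= x < Z.of_nat p -> periodize (window B a p) x = B (a + x).
Proof.
  intros Hx. unfold periodize. rewrite window_length, Z.mod_small by lia.
  rewrite nth_window by lia. f_equal. lia.
Qed.

Lemma window_periodize w : window (periodize w) 0 (length w) = w.
Proof.
  apply nth_ext with false false; rewrite ?window_length; [reflexivity|].
  intros k Hk. rewrite nth_window by exact Hk. unfold periodize.
  rewrite Z.add_0_l, Z.mod_small by lia. now rewrite Nat2Z.id.
Qed.

Lemma count_in_periodic_le P p N : (0 < p)%nat -> periodic P (Z.of_nat p) ->
  (count_in P N * p <= weight P 0 p * (2 * N + 1) + weight P 0 p * p)%nat.
Proof.
  intros Hp Hper. rewrite count_in_weight.
  set (n := (2 * N + 1)%nat). set (k := (n / p + 1)%nat).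
  assert (Hdiv := Nat.div_mod_eq n p). assert (Hmod := Nat.mod_upper_bound n p ltac:(lia)).
  assert (Hcover : (n <= k * p)%nat) by (unfold k; nia).
  pose proof (weight_mono P (- Z.of_nat N) n (k * p) Hcover) as Hle.
  rewrite (weight_periodic_mul P p _ k Hper) in Hle. unfold k in Hle. nia.
Qed.

Fixpoint bool_words (n : nat) : list (list bool) :=
  match n with
  | O => [[]]
  | S n => map (cons true) (bool_words n) ++ map (cons false) (bool_words n)
  end.

Lemma length_bool_words n : length (bool_words n) = (2 ^ n)%nat.
Proof. induction n as [|n IH]; simpl; [reflexivity|]. rewrite length_app, !length_map. lia. Qed.

Lemma in_bool_words n w : In w (bool_words n) <-> length w = n.
Proof.
  revert w. induction n as [|n IH]; intros w; simpl.
  - split; [intros [<-|[]]; reflexivity|]. destruct w; [left; reflexivity|discriminate].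
  - rewrite in_app_iff, !in_map_iff. split.
    + intros [[w' [<- Hw]]|[w' [<- Hw]]]; simpl; f_equal; apply IH, Hw.
    + destruct w as [|b w]; [discriminate|]. intros Hw. injection Hw as Hw.
      destruct b; [left|right]; exists w; split; auto; apply IH, Hw.
Qed.

Lemma pigeonhole_shift {X} (f : Z -> X) (Ls : list X) a n :
  (length Ls < n)%nat -> (forall t, (t < n)%nat -> In (f (a + Z.of_nat t)) Ls) ->
  exists x y, (x < y < n)%nat /\ f (a + Z.of_nat x) = f (a + Z.of_nat y).
Proof.
  intros Hlen Hin.
  set (l := map (fun t => f (a + Z.of_nat t)) (seq 0 n)).
  assert (Hl : length l = n) by (unfold l; now rewrite length_map, length_seq).
  assert (Hnth : forall t, (t < n)%nat -> nth t l (f (a + Z.of_nat 0)) = f (a + Z.of_nat t)).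
  { intros t Ht. unfold l. now rewrite (map_nth (fun t => f (a + Z.of_nat t)) _ 0%nat), seq_nth. }
  assert (Hdup : ~ NoDup l).
  { intros Hnd. enough (n <= length Ls)%nat by lia. rewrite <- Hl.
    apply NoDup_incl_length; [exact Hnd|]. intros y Hy.
    apply in_map_iff in Hy as [t [<- Ht]]. apply in_seq in Ht. apply Hin. lia. }
  apply NNPP. intros Hno. apply Hdup, (NoDup_nth l (f (a + Z.of_nat 0))).
  intros i j Hi Hj Heq. rewrite Hl in Hi, Hj. rewrite !Hnth in Heq by assumption.
  destruct (lt_eq_lt_dec i j) as [[Hij|Hij]|Hji]; [|exact Hij|];
    exfalso; apply Hno; [exists i, j|exists j, i]; split; auto; lia.
Qed.

Section Periodization.

Variables (S : list Z) (r : nat) (m : Z).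
Hypothesis ball_le : forall u a, ball S r u a -> Z.abs (u - a) <= m.

Lemma periodize_window_agree B i p K :
  (0 < p)%nat -> window B i K = window B (i + Z.of_nat p) K ->
  forall z, i <= z < i + Z.of_nat p + Z.of_nat K -> periodize (window B i p) (z - i) = B z.
Proof.
  intros Hp Hrep.
  assert (Hbounded : forall n : nat, forall z, i <= z < i + Z.of_nat p + Z.of_nat K ->
            z - i <= Z.of_nat n -> periodize (window B i p) (z - i) = B z).
  { induction n as [|n IH]; intros z Hz Hn.
    - rewrite periodize_window by lia. f_equal. lia.
    - destruct (Z_lt_le_dec z (i + Z.of_nat p)).
      + rewrite periodize_window by lia. f_equal. lia.
      + replace (z - i) with ((z - Z.of_nat p - i) + 1 * Z.of_nat (length (window B i p)))
          by (rewrite window_length; lia).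
        rewrite periodize_add_mul, IH by lia.
        pose proof (window_eq_pointwise _ _ _ _ _ Hrep (Z.to_nat (z - Z.of_nat p - i)) ltac:(lia))
          as Hz'.
        rewrite Z2Nat.id in Hz' by lia.
        replace (i + (z - Z.of_nat p - i)) with (z - Z.of_nat p) in Hz' by lia.
        rewrite Hz'. f_equal. lia. }
  intros z Hz. apply (Hbounded (Z.to_nat (z - i))); lia.
Qed.

Lemma locally_identifying_periodize B i p :
  (0 < p)%nat -> locally_identifying S r m B ->
  window B i (Z.to_nat (4 * m)) = window B (i + Z.of_nat p) (Z.to_nat (4 * m)) ->
  locally_identifying S r m (periodize (window B i p)).
Proof.
  intros Hp HB Hrep u.
  pose proof (radius_nonneg S r m ball_le) as Hm.
  set (w := window B i p).
  set (q := (u - m) / Z.of_nat p).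
  set (t := i - q * Z.of_nat p).
  assert (Hlen : length w = p) by apply window_length.
  assert (Hut : u + t = i + m + (u - m) mod Z.of_nat p)
    by (unfold t, q; rewrite Z.mod_eq by lia; lia).
  pose proof (Z.mod_pos_bound (u - m) (Z.of_nat p) ltac:(lia)) as Hr.
  assert (Hu : identifying_at S r m (fun z => periodize w (z - i)) (u + t)).
  { apply (identifying_at_local S r m ball_le B); [|apply HB].
    intros x Hx. symmetry. apply (periodize_window_agree B i p (Z.to_nat (4 * m)) Hp Hrep). lia. }
  apply identifying_at_translate in Hu.
  replace (periodize w) with (fun x => periodize w (x + t - i)); [exact Hu|].
  apply functional_extensionality. intros x.
  replace (x + t - i) with (x + - q * Z.of_nat (length w)) by (unfold t; rewrite Hlen; lia).
  apply periodize_add_mul.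
Qed.

Variables (c0 p0 : nat).

Local Notation K := (Z.to_nat (4 * m)).

Hypothesis min_ratio : forall w, (1 <= length w <= 2 ^ K)%nat ->
  locally_identifying S r m (periodize w) -> (c0 * length w <= ones w * p0)%nat.

Lemma cycle_weight_ge p B i :
  (0 < p)%nat -> locally_identifying S r m B ->
  window B i K = window B (i + Z.of_nat p) K ->
  (c0 * p <= weight B i p * p0)%nat.
Proof.
  revert B i. induction p as [p IH] using lt_wf_ind. intros B i Hp HB Hrep.
  pose proof (locally_identifying_periodize B i p Hp HB Hrep) as Hcode.
  destruct (le_lt_dec p (2 ^ K)) as [Hshort|Hlong].
  { pose proof (min_ratio (window B i p)) as Hmin. rewrite window_length in Hmin.
    apply Hmin; [lia|exact Hcode]. }
  set (P := fun z => periodize (window B i p) (z - i)).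
  assert (Hagree : forall z, i <= z < i + Z.of_nat p + Z.of_nat K -> P z = B z)
    by (intros z Hz; apply (periodize_window_agree B i p K Hp Hrep), Hz).
  assert (Hper : periodic P (Z.of_nat p)).
  { intros z. unfold P.
    replace (z + Z.of_nat p - i) with (z - i + 1 * Z.of_nat (length (window B i p)))
      by (rewrite window_length; lia).
    apply periodize_add_mul. }
  assert (HP : locally_identifying S r m P).
  { replace P with (fun z => periodize (window B i p) (z + - i))
      by (apply functional_extensionality; intros z; unfold P; f_equal; lia).
    apply locally_identifying_translate, Hcode. }
  destruct (pigeonhole_shift (fun t => window B t K) (bool_words K) i (2 ^ K + 1))
    as [x [y [Hxy Hxy_rep]]].
  { rewrite length_bool_words. lia. }
  { intros t _. apply in_bool_words, window_length. }
  cbv beta in Hxy_rep. set (d := (y - x)%nat).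
  (* one full period of P, starting at i + x, splits into the cycle [x, y) of B
     and a cycle of P of length p - d *)
  assert (Hsplit : weight B i p
                   = (weight B (i + Z.of_nat x) d + weight P (i + Z.of_nat x + Z.of_nat d) (p - d))%nat).
  { rewrite (weight_ext B P i i p) by (intros k Hk; symmetry; apply Hagree; lia).
    rewrite (weight_periodic_shift P p i (i + Z.of_nat x) Hper).
    replace p with (d + (p - d))%nat at 1 by lia. rewrite weight_add.
    f_equal. apply weight_ext. intros k Hk. apply Hagree. lia. }
  assert (Hfirst : (c0 * d <= weight B (i + Z.of_nat x) d * p0)%nat).
  { apply IH; [lia|lia|exact HB|]. rewrite Hxy_rep. f_equal. lia. }
  assert (Hsecond : (c0 * (p - d) <= weight P (i + Z.of_nat x + Z.of_nat d) (p - d) * p0)%nat).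
  { apply IH; [lia|lia|exact HP|].
    replace (i + Z.of_nat x + Z.of_nat d + Z.of_nat (p - d)) with (i + Z.of_nat x + Z.of_nat p) by lia.
    transitivity (window B (i + Z.of_nat y) K).
    - apply window_ext. intros k Hk. rewrite Hagree by lia. f_equal. lia.
    - rewrite <- Hxy_rep. apply window_ext. intros k Hk.
      replace (i + Z.of_nat x + Z.of_nat p + Z.of_nat k)
        with (i + Z.of_nat x + Z.of_nat k + Z.of_nat p) by lia.
      rewrite Hper, Hagree by lia. reflexivity. }
  rewrite Hsplit. nia.
Qed.

End Periodization.

Section CoverByCycles.

Variables (K c0 p0 : nat) (B : Z -> bool).
Hypothesis c0_le_p0 : (c0 <= p0)%nat.
Hypothesis cycle_ge : forall p i, (0 < p)%nat ->
  window B i K = window B (i + Z.of_nat p) K -> (c0 * p <= weight B i p * p0)%nat.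

(* Either the first K-window recurs, and a cycle is cut off, or it never
   recurs, and it is dropped from the list of windows still to be met; each
   dropped window costs at most one position of weight deficit p0. *)
Lemma weight_ge_of_windows_in Ls n a :
  (forall t, (t <= n)%nat -> In (window B (a + Z.of_nat t) K) Ls) ->
  (c0 * n <= weight B a n * p0 + p0 * length Ls)%nat.
Proof.
  remember (length Ls) as L eqn:HL. revert Ls HL n a.
  induction L as [L IHL] using lt_wf_ind. intros Ls HL n.
  induction n as [n IHn] using lt_wf_ind. intros a Hin.
  destruct n as [|n]; [simpl; lia|].
  assert (Ha : In (window B a K) Ls)
    by (rewrite <- (Z.add_0_r a) at 1; apply (Hin 0%nat); lia).
  destruct (classic (exists t, (1 <= t <= S n)%nat /\ window B (a + Z.of_nat t) K = window B a K))
    as [[t [Ht Hrec]]|Hnorec].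
  - assert (Hcycle : (c0 * t <= weight B a t * p0)%nat) by (apply cycle_ge; [lia|auto]).
    assert (Hrest : (c0 * (S n - t) <= weight B (a + Z.of_nat t) (S n - t) * p0 + p0 * L)%nat).
    { apply IHn; [lia|]. intros t' Ht'. rewrite <- Z.add_assoc, <- Nat2Z.inj_add. apply Hin. lia. }
    replace (S n) with (t + (S n - t))%nat by lia. rewrite weight_add. nia.
  - set (Ls' := remove (list_eq_dec Bool.bool_dec) (window B a K) Ls).
    assert (Hlen : (length Ls' < L)%nat) by (subst L; apply remove_length_lt, Ha).
    assert (Hrest : (c0 * n <= weight B (a + 1) n * p0 + p0 * length Ls')%nat).
    { apply (IHL _ Hlen Ls' eq_refl). intros t Ht. apply in_in_remove.
      - intros Heq. apply Hnorec. exists (S t). split; [lia|].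
        rewrite <- Heq. f_equal. lia.
      - replace (a + 1 + Z.of_nat t) with (a + Z.of_nat (S t)) by lia. apply Hin. lia. }
    replace (S n) with (1 + n)%nat by reflexivity. rewrite weight_add.
    replace (a + Z.of_nat 1) with (a + 1) by reflexivity. nia.
Qed.

Lemma weight_ge_all_windows a n : (c0 * n <= weight B a n * p0 + p0 * 2 ^ K)%nat.
Proof.
  rewrite <- length_bool_words. apply weight_ge_of_windows_in.
  intros t _. apply in_bool_words, window_length.
Qed.

End CoverByCycles.

Lemma exists_min_ratio {X} (num den : X -> nat) (good : X -> Prop) (l : list X) :
  (forall x, In x l -> (0 < den x)%nat) -> (exists x, In x l /\ good x) ->
  exists x0, In x0 l /\ good x0 /\
    forall x, In x l -> good x -> (num x0 * den x <= num x * den x0)%nat.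
Proof.
  induction l as [|y l IH]; intros Hpos Hex; [destruct Hex as [x [[] _]]|].
  assert (Hpos' : forall x, In x l -> (0 < den x)%nat) by (intros x Hx; apply Hpos; right; exact Hx).
  destruct (classic (exists x, In x l /\ good x)) as [Hexl|Hnone].
  - destruct (IH Hpos' Hexl) as [x0 [Hx0 [Hg0 Hmin]]].
    destruct (classic (good y /\ (num y * den x0 < num x0 * den y)%nat)) as [[Hgy Hlt]|Hnot].
    + exists y. split; [left; reflexivity|]. split; [exact Hgy|].
      intros x [<-|Hx] Hgx; [lia|]. specialize (Hmin x Hx Hgx).
      pose proof (Hpos' x0 Hx0). pose proof (Hpos' x Hx).
      apply (Nat.mul_le_mono_pos_r _ _ (den x0)); [lia|]. nia.
    + exists x0. split; [right; exact Hx0|]. split; [exact Hg0|].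
      intros x [<-|Hx] Hgx; [|exact (Hmin x Hx Hgx)].
      destruct (le_lt_dec (num x0 * den y) (num y * den x0)); [assumption|].
      exfalso. apply Hnot. split; assumption.
  - destruct Hex as [x [[<-|Hx] Hgx]]; [|exfalso; apply Hnone; exists x; split; assumption].
    exists y. split; [left; reflexivity|]. split; [exact Hgx|].
    intros x' [<-|Hx'] Hgx'; [lia|]. exfalso. apply Hnone. exists x'. split; assumption.
Qed.

Lemma exists_min_ratio_periodic_code (code : (Z -> bool) -> Prop) (n : nat) :
  (1 <= n)%nat -> code (fun _ => true) ->
  exists w0, (1 <= length w0 <= n)%nat /\ code (periodize w0) /\
    forall w, (1 <= length w <= n)%nat -> code (periodize w) ->
      (ones w0 * length w <= ones w * length w0)%nat.
Proof.
  intros Hn Htrue.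
  set (cands := flat_map bool_words (seq 1 n)).
  assert (Hcands : forall w, In w cands <-> (1 <= length w <= n)%nat).
  { intros w. unfold cands. rewrite in_flat_map. split.
    - intros [k [Hk Hw]]. apply in_seq in Hk. apply in_bool_words in Hw. lia.
    - intros Hw. exists (length w). split; [apply in_seq; lia|apply in_bool_words; reflexivity]. }
  destruct (exists_min_ratio ones (@length bool) (fun w => code (periodize w)) cands)
    as [w0 [Hw0 [Hcode Hmin]]].
  - intros w Hw. apply Hcands in Hw. lia.
  - exists [true]. split; [apply Hcands; simpl; lia|].
    replace (periodize [true]) with (fun _ : Z => true); [exact Htrue|].
    apply functional_extensionality. intros x. unfold periodize. now rewrite Z.mod_1_r.
  - exists w0. split; [apply Hcands, Hw0|]. split; [exact Hcode|].
    intros w Hw. apply Hmin, Hcands, Hw.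
Qed.

Lemma is_lim_seq_div_odd (C : R) : is_lim_seq (fun N => C / INR (2 * N + 1))%R 0%R.
Proof.
  assert (Hinf : is_lim_seq (fun N => INR (2 * N + 1)) p_infty).
  { apply is_lim_seq_le_p_loc with INR; [|apply is_lim_seq_INR].
    exists 0%nat. intros N _. apply le_INR. lia. }
  pose proof (is_lim_seq_inv _ _ Hinf ltac:(discriminate)) as Hinv. simpl in Hinv.
  apply (is_lim_seq_scal_l _ C) in Hinv. simpl in Hinv. rewrite Rmult_0_r in Hinv. exact Hinv.
Qed.

Lemma density_le_of_count A c p C : (0 < p)%nat ->
  (forall N, (count_in A N * p <= c * (2 * N + 1) + C * p)%nat) ->
  Rbar_le (density A) (INR c / INR p)%R.
Proof.
  intros Hp Hcount. set (x := (INR c / INR p)%R).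
  assert (Hlim : is_lim_seq (fun N => x + INR C / INR (2 * N + 1))%R x).
  { pose proof (is_lim_seq_plus' _ _ x 0%R (is_lim_seq_const x) (is_lim_seq_div_odd (INR C))) as H.
    rewrite Rplus_0_r in H. exact H. }
  unfold density. eapply Rbar_le_trans.
  - apply LimSup_le with (v := fun N => (x + INR C / INR (2 * N + 1))%R).
    exists 0%nat. intros N _.
    pose proof (le_INR _ _ (Hcount N)) as H. rewrite plus_INR, !mult_INR in H.
    assert (0 < INR p)%R by (apply lt_0_INR; lia).
    assert (0 < INR (2 * N + 1))%R by (apply lt_0_INR; lia).
    unfold x. apply (Rmult_le_reg_r (INR p * INR (2 * N + 1))); [nra|].
    replace (INR (count_in A N) / INR (2 * N + 1) * (INR p * INR (2 * N + 1)))%R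
      with (INR (count_in A N) * INR p)%R by (field; lra).
    replace ((INR c / INR p + INR C / INR (2 * N + 1)) * (INR p * INR (2 * N + 1)))%R
      with (INR c * INR (2 * N + 1) + INR C * INR p)%R by (field; lra).
    exact H.
  - rewrite (is_LimSup_seq_unique _ _ (is_lim_LimSup_seq _ _ Hlim)). apply Rbar_le_refl.
Qed.

Lemma density_ge_of_count B c p C : (0 < p)%nat ->
  (forall N, (c * (2 * N + 1) <= count_in B N * p + p * C)%nat) ->
  Rbar_le (INR c / INR p)%R (density B).
Proof.
  intros Hp Hcount. set (x := (INR c / INR p)%R).
  assert (Hlim : is_lim_seq (fun N => x - INR C / INR (2 * N + 1))%R x).
  { pose proof (is_lim_seq_minus' _ _ x 0%R (is_lim_seq_const x) (is_lim_seq_div_odd (INR C))) as H.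
    rewrite Rminus_0_r in H. exact H. }
  unfold density. eapply Rbar_le_trans.
  2: { apply LimSup_le with (u := fun N => (x - INR C / INR (2 * N + 1))%R).
    exists 0%nat. intros N _.
    pose proof (le_INR _ _ (Hcount N)) as H. rewrite plus_INR, !mult_INR in H.
    assert (0 < INR p)%R by (apply lt_0_INR; lia).
    assert (0 < INR (2 * N + 1))%R by (apply lt_0_INR; lia).
    unfold x. apply (Rmult_le_reg_r (INR p * INR (2 * N + 1))); [nra|].
    replace (INR (count_in B N) / INR (2 * N + 1) * (INR p * INR (2 * N + 1)))%R
      with (INR (count_in B N) * INR p)%R by (field; lra).
    replace ((INR c / INR p - INR C / INR (2 * N + 1)) * (INR p * INR (2 * N + 1)))%R
      with (INR c * INR (2 * N + 1) - INR p * INR C)%R by (field; lra).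
    lra. }
  rewrite (is_LimSup_seq_unique _ _ (is_lim_LimSup_seq _ _ Hlim)). apply Rbar_le_refl.
Qed.

Theorem corollary6 (S : list Z) (r : nat) :
  S <> nil ->
  (forall x, In x S -> 0 < x) ->
  (1 <= r)%nat ->
  exists (A : Z -> bool) (p : Z),
    0 < p /\
    p <= (6 * maxS S * Z.of_nat r) * 2 ^ (6 * maxS S * Z.of_nat r) /\
    periodic A p /\
    identifying S r A /\
    (forall B : Z -> bool, identifying S r B -> Rbar_le (density A) (density B)).
Proof.
  intros Hne Hpos Hr.
  pose proof (maxS_in S Hne Hpos) as Hin.
  set (m := maxS S * Z.of_nat r).
  assert (Hm : 1 <= m) by (specialize (Hpos _ Hin); unfold m; nia).
  assert (Hball : forall u a, ball S r u a -> Z.abs (u - a) <= m) by (intros u a; apply within_abs_le).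
  set (K := Z.to_nat (4 * m)).
  destruct (exists_min_ratio_periodic_code (locally_identifying S r m) (2 ^ K))
    as [w0 [Hlen [Hcode Hmin]]].
  { pose proof (Nat.pow_nonzero 2 K). lia. }
  { apply locally_identifying_true; assumption. }
  set (p0 := length w0). set (c0 := ones w0).
  exists (periodize w0), (Z.of_nat p0).
  split; [lia|]. split.
  { assert (Z.of_nat (2 ^ K) = 2 ^ (4 * m)) by (rewrite Nat2Z.inj_pow; unfold K; f_equal; lia).
    assert (2 ^ (4 * m) <= 2 ^ (6 * m)) by (apply Z.pow_le_mono_r; lia).
    replace (6 * maxS S * Z.of_nat r) with (6 * m) by (unfold m; ring). nia. }
  split; [apply periodic_periodize|]. split; [apply (identifying_iff_local S r m Hball), Hcode|].
  intros B HB. apply Rbar_le_trans with (INR c0 / INR p0)%R.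
  - apply density_le_of_count with (C := c0); [lia|]. intros N.
    pose proof (count_in_periodic_le (periodize w0) p0 N ltac:(lia) (periodic_periodize w0)) as H.
    unfold weight in H. rewrite window_periodize in H. exact H.
  - apply density_ge_of_count with (C := (2 ^ K)%nat); [lia|]. intros N. rewrite count_in_weight.
    apply weight_ge_all_windows; [apply ones_le_length|].
    intros p i Hp Hrep. apply (cycle_weight_ge S r m Hball c0 p0 Hmin); [exact Hp| |exact Hrep].
    apply (identifying_iff_local S r m Hball), HB.
Qed.
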